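(* The calculus $\lambda_{\parallel}$ terminates: if $\Gamma\vdash M:\alpha$ in $\lambda_{\parallel}$, then there is no infinite reduction sequence $M\to M_1\to M_2\to\cdots$.
   Context: Terms are considered up to $\alpha$-renaming; $[V/x]M$ is capture-avoiding substitution. The parallel call-by-value $\lambda$-calculus $\lambda_{\parallel}$: values $V::=*\mid\lambda x.M\mid x$; terms $M::=V\mid MM\mid (M\mid M)$; evaluation contexts $E::=[\,]\mid E[[\,]M]\mid E[V[\,]]\mid E[[\,]\mid M]\mid E[M\mid[\,]]$; value types $A::=1\mid A\to\alpha$; types $\alpha::=A\mid b$ ($b$ a distinguished behavior type). Reduction: $E[(\lambda x.M)V]\to E[[V/x]M]$. Typing ($\Gamma$ a finite map from variables to value types): $\Gamma\vdash x:A$ if $x:A\in\Gamma$; $\Gamma\vdash *:1$; $\Gamma\vdash\lambda x.M:A\to\alpha$ if $\Gamma,x:A\vdash M:\alpha$; $\Gamma\vdash MN:\alpha$ if $\Gamma\vdash M:A\to\alpha$ and $\Gamma\vdash N:A$; $\Gamma\vdash (M_1\mid M_2):b$ if $\Gamma\vdash M_i:b$ for $i=1,2$. *)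

(* Parallel call-by-value lambda calculus lambda_par,
   with terms represented by de Bruijn indices (terms up to alpha-renaming). *)
From Stdlib Require Import List Arith.
Import ListNotations.

Inductive term : Type :=
| tvar  : nat -> term
| tunit : term
| tlam  : term -> term
| tapp  : term -> term -> term
| tpar  : term -> term -> term.

Definition is_value (t : term) : Prop :=
  match t with
  | tvar _ | tunit | tlam _ => True
  | _ => False
  end.

Definition up_ren (r : nat -> nat) : nat -> nat :=
  fun n => match n with 0 => 0 | S n' => S (r n') end.

Fixpoint rename (r : nat -> nat) (t : term) : term :=
  match t with
  | tvar n => tvar (r n)
  | tunit => tunit
  | tlam M => tlam (rename (up_ren r) M)
  | tapp M N => tapp (rename r M) (rename r N)
  | tpar M N => tpar (rename r M) (rename r N)
  end.

Definition up_sub (s : nat -> term) : nat -> term :=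
  fun n => match n with 0 => tvar 0 | S n' => rename S (s n') end.

Fixpoint subst (s : nat -> term) (t : term) : term :=
  match t with
  | tvar n => s n
  | tunit => tunit
  | tlam M => tlam (subst (up_sub s) M)
  | tapp M N => tapp (subst s M) (subst s N)
  | tpar M N => tpar (subst s M) (subst s N)
  end.

(* [V/x]M, where x is the bound variable 0 of the body M *)
Definition subst1 (V M : term) : term :=
  subst (fun n => match n with 0 => V | S n' => tvar n' end) M.

(* Reduction E[(lambda x.M) V] -> E[[V/x]M], with
   E ::= [] | E[[] M] | E[V []] | E[[] | M] | E[M | []]  *)
Inductive step : term -> term -> Prop :=
| step_beta : forall M V, is_value V -> step (tapp (tlam M) V) (subst1 V M)
| step_appL : forall M M' N, step M M' -> step (tapp M N) (tapp M' N)
| step_appR : forall V N N', is_value V -> step N N' -> step (tapp V N) (tapp V N')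
| step_parL : forall M M' N, step M M' -> step (tpar M N) (tpar M' N)
| step_parR : forall M N N', step N N' -> step (tpar M N) (tpar M N').

Inductive vty : Type :=
| vone : vty
| varr : vty -> ty -> vty
with ty : Type :=
| tyv : vty -> ty
| tyb : ty.

Inductive has_type : list vty -> term -> ty -> Prop :=
| ty_var : forall G n A, nth_error G n = Some A -> has_type G (tvar n) (tyv A)
| ty_unit : forall G, has_type G tunit (tyv vone)
| ty_lam : forall G A a M, has_type (A :: G) M a -> has_type G (tlam M) (tyv (varr A a))
| ty_app : forall G A a M N,
    has_type G M (tyv (varr A a)) -> has_type G N (tyv A) -> has_type G (tapp M N) a
| ty_par : forall G M1 M2,
    has_type G M1 tyb -> has_type G M2 tyb -> has_type G (tpar M1 M2) tyb.

(* Tait-style reducibility.  A value type A is read as a set of values and a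
   type as a set of strongly normalising terms: at value type A, a term is
   reducible when every value it reduces to is a reducible value of type A;
   at the behaviour type b, strong normalisation alone suffices, which is
   closed under parallel composition since the two branches reduce
   independently.  Reducible expressions are closed under reduction and
   under backward expansion of non-values, and every typable term under a
   reducible substitution is reducible; instantiating the substitution by
   the variables themselves (which are reducible values of every type)
   gives strong normalisation of every typable term. *)
From Stdlib Require Import List Relations.

Lemma rename_ext t r1 r2 : (forall n, r1 n = r2 n) -> rename r1 t = rename r2 t.
Proof.
  revert r1 r2; induction t; intros r1 r2 H; simpl; f_equal; auto.
  apply IHt; intros [|n]; simpl; auto.
Qed.

Lemma subst_ext t s1 s2 : (forall n, s1 n = s2 n) -> subst s1 t = subst s2 t.
Proof.
  revert s1 s2; induction t; intros s1 s2 H; simpl; f_equal; auto.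
  apply IHt; intros [|n]; simpl; rewrite ?H; auto.
Qed.

Lemma rename_rename t r1 r2 :
  rename r1 (rename r2 t) = rename (fun n => r1 (r2 n)) t.
Proof.
  revert r1 r2; induction t; intros r1 r2; simpl; f_equal; auto.
  rewrite IHt; apply rename_ext; intros [|n]; reflexivity.
Qed.

Lemma subst_rename t s r : subst s (rename r t) = subst (fun n => s (r n)) t.
Proof.
  revert s r; induction t; intros s r; simpl; f_equal; auto.
  rewrite IHt; apply subst_ext; intros [|n]; reflexivity.
Qed.

Lemma rename_subst t s r :
  rename r (subst s t) = subst (fun n => rename r (s n)) t.
Proof.
  revert s r; induction t; intros s r; simpl; f_equal; auto.
  rewrite IHt; apply subst_ext; intros [|n]; simpl; auto.
  rewrite !rename_rename; reflexivity.
Qed.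

Lemma subst_subst t s1 s2 :
  subst s1 (subst s2 t) = subst (fun n => subst s1 (s2 n)) t.
Proof.
  revert s1 s2; induction t; intros s1 s2; simpl; f_equal; auto.
  rewrite IHt; apply subst_ext; intros [|n]; simpl; auto.
  rewrite subst_rename, rename_subst; reflexivity.
Qed.

Lemma subst_id t : subst tvar t = t.
Proof.
  induction t; simpl; f_equal; auto.
  rewrite <- IHt at 2; apply subst_ext; intros [|n]; reflexivity.
Qed.

Definition scons (W : term) (s : nat -> term) : nat -> term :=
  fun n => match n with 0 => W | S n' => s n' end.

Lemma subst1_up_sub W s M : subst1 W (subst (up_sub s) M) = subst (scons W s) M.
Proof.
  unfold subst1; rewrite subst_subst; apply subst_ext; intros [|n]; simpl; auto.
  rewrite subst_rename; rewrite <- (subst_id (s n)) at 2; apply subst_ext; reflexivity.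
Qed.

Definition SN : term -> Prop := Acc (fun u t => step t u).

Definition steps : relation term := clos_refl_trans_1n term step.

Lemma value_irreducible V t : is_value V -> ~ step V t.
Proof. intros HV Hs; destruct Hs; simpl in HV; auto. Qed.

Lemma SN_no_infinite_chain t :
  SN t -> ~ (exists f : nat -> term, f 0 = t /\ forall n, step (f n) (f (S n))).
Proof.
  induction 1 as [t _ IH]; intros [f [Hf0 Hf]].
  apply (IH (f 1)); [rewrite <- Hf0; apply Hf |].
  exists (fun n => f (S n)); split; [reflexivity | intros n; apply Hf].
Qed.

Lemma SN_par M N : SN M -> SN N -> SN (tpar M N).
Proof.
  intros HM; revert N; induction HM as [M _ IHM]; intros N HN.
  induction HN as [N HN IHN]; constructor; intros t Hs.
  inversion Hs; subst; [apply IHM; auto; constructor; exact HN | apply IHN; assumption].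
Qed.

Fixpoint red_val (A : vty) (t : term) : Prop :=
  match A with
  | vone => is_value t
  | varr A a => is_value t /\ forall W, red_val A W -> red_exp a (tapp t W)
  end
with red_exp (a : ty) (t : term) : Prop :=
  match a with
  | tyv A => SN t /\ forall u, steps t u -> is_value u -> red_val A u
  | tyb => SN t
  end.

Lemma red_val_is_value A t : red_val A t -> is_value t.
Proof. destruct A; simpl; tauto. Qed.

Lemma red_exp_SN a t : red_exp a t -> SN t.
Proof. destruct a; simpl; tauto. Qed.

Lemma red_exp_step a t t' : red_exp a t -> step t t' -> red_exp a t'.
Proof.
  destruct a; simpl; intros Ht Hs.
  - destruct Ht as [HSN Hval]; split; [exact (Acc_inv HSN Hs) |].
    intros u Hu; apply Hval; econstructor; eauto.
  - exact (Acc_inv Ht Hs).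
Qed.

Lemma red_exp_expand a t :
  ~ is_value t -> (forall t', step t t' -> red_exp a t') -> red_exp a t.
Proof.
  destruct a; simpl; intros Hnv Hred.
  - split; [constructor; intros t' Hs; apply Hred in Hs; tauto |].
    intros u Hu Hv; destruct Hu as [| t' u Hs Hsu]; [contradiction |].
    exact (proj2 (Hred t' Hs) u Hsu Hv).
  - constructor; exact Hred.
Qed.

Lemma red_val_exp A t : red_val A t -> red_exp (tyv A) t.
Proof.
  intros Ht; pose proof (red_val_is_value _ _ Ht) as Hv; simpl; split.
  - constructor; intros t' Hs; contradiction (value_irreducible _ _ Hv Hs).
  - intros u Hu _; destruct Hu as [| t' u Hs _]; auto.
    contradiction (value_irreducible _ _ Hv Hs).
Qed.

(* [tvar n W] is a stuck non-value, hence vacuously reducible. *)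
Lemma red_val_var A n : red_val A (tvar n).
Proof.
  destruct A as [| A a]; simpl; [exact I |]; split; [exact I |].
  intros W HW; apply red_exp_expand; [simpl; auto |]; intros t Hs.
  inversion Hs as [| ? ? ? Hvar | ? ? ? _ HW' | |]; subst.
  - inversion Hvar.
  - contradiction (value_irreducible _ _ (red_val_is_value _ _ HW) HW').
Qed.

Lemma red_val_lam A a M :
  (forall W, red_val A W -> red_exp a (subst1 W M)) -> red_val (varr A a) (tlam M).
Proof.
  intros HM; simpl; split; [exact I |].
  intros W HW; apply red_exp_expand; [simpl; auto |]; intros t Hs.
  inversion Hs as [| ? ? ? Hlam | ? ? ? _ HW' | |]; subst.
  - auto.
  - inversion Hlam.
  - contradiction (value_irreducible _ _ (red_val_is_value _ _ HW) HW').
Qed.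

(* Induction on the reduction trees of both sides: a beta step fires only once
   both have become values, where reducibility of the function applies. *)
Lemma red_exp_app A a M N :
  red_exp (tyv (varr A a)) M -> red_exp (tyv A) N -> red_exp a (tapp M N).
Proof.
  intros HM; revert N; pose proof (red_exp_SN _ _ HM) as HSM.
  induction HSM as [M _ IHM]; intros N HN.
  pose proof (red_exp_SN _ _ HN) as HSN; induction HSN as [N _ IHN].
  apply red_exp_expand; [simpl; auto |]; intros t Hs.
  inversion Hs as [M' V HV | ? M' ? HsM | ? ? N' _ HsN | |]; subst.
  - assert (Hlam : red_val (varr A a) (tlam M')) by (apply HM; [constructor | exact I]).
    assert (HVr : red_val A N) by (apply HN; [constructor | exact HV]).
    exact (red_exp_step _ _ _ (proj2 Hlam N HVr) Hs).
  - apply IHM; [exact HsM | exact (red_exp_step _ _ _ HM HsM) | exact HN].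
  - apply IHN; [exact HsN | exact (red_exp_step _ _ _ HN HsN)].
Qed.

Lemma typed_subst_red_exp G M a :
  has_type G M a ->
  forall s, (forall n A, nth_error G n = Some A -> red_val A (s n)) ->
  red_exp a (subst s M).
Proof.
  induction 1 as [G n A HA | G | G A a M _ IH | G A a M N _ IHM _ IHN
                 | G M1 M2 _ IH1 _ IH2]; intros s Hs.
  - exact (red_val_exp _ _ (Hs n A HA)).
  - exact (red_val_exp vone tunit I).
  - apply (red_val_exp (varr A a)), red_val_lam; intros W HW.
    rewrite subst1_up_sub; apply IH; intros [| n] B HB; simpl in HB |- *; auto.
    congruence.
  - exact (red_exp_app _ _ _ _ (IHM s Hs) (IHN s Hs)).
  - exact (SN_par _ _ (IH1 s Hs) (IH2 s Hs)).
Qed.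

Theorem proposition1 (G : list vty) (M : term) (a : ty) :
  has_type G M a ->
  ~ (exists f : nat -> term, f 0 = M /\ forall n, step (f n) (f (S n))).
Proof.
  intros HM; apply SN_no_infinite_chain, (red_exp_SN a).
  rewrite <- (subst_id M).
  apply (typed_subst_red_exp G); [exact HM |].
  intros n A _; apply red_val_var.
Qed.
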